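(* Let $\mathbb A=(A_n)_{n\in\mathbb Z^+}$ be a sequence of invertible linear operators on $\mathbb R^d$ and $\mathcal S=\{\|\cdot\|_n;\ n\in\mathbb Z^+\}$ a sequence of norms such that there exist $K,a>0$ with $\|\mathcal A(m,n)x\|_m\le Ke^{a(m-n)}\|x\|_n$ and $\|\mathcal A(n,m)x\|_n\le Ke^{a(m-n)}\|x\|_m$ for all $m\ge n$, $x$. Let $\Sigma=\Sigma_{ED,\mathbb A,\mathcal S}$ and let $r_1<r_2$ be in $(0,\infty)\setminus\Sigma$. Then the following are equivalent: (a) $S_{r_1}(n)=S_{r_2}(n)$ for some $n\in\mathbb Z^+$ (equivalently, for all $n\in\mathbb Z^+$); (b) $[r_1,r_2]\cap\Sigma=\emptyset$.
   Context: $\mathbb Z^+=\{0,1,\dots\}$. $\mathcal A(m,n)=A_{m-1}\cdots A_n$ ($m>n$), $\mathrm{Id}$ ($m=n$), $A_m^{-1}\cdots A_{n-1}^{-1}$ ($m<n$). For $r>0$, $n\in\mathbb Z^+$: $S_r(n)=\{v\in\mathbb R^d:\ \sup_{m\ge n}r^{-(m-n)}\|\mathcal A(m,n)v\|_m<+\infty\}$. A sequence $(C_n)_{n\in\mathbb Z^+}$ with cocycle $\mathcal C$ admits a strong exponential dichotomy w.r.t. $\mathcal S$ if there exist $K>0$, $a\ge\lambda>0$ and projections $P_n$ with $C_nP_n=P_{n+1}C_n$ such that for $m\ge n$, $x$, $Q_m=\mathrm{Id}-P_m$: $\|\mathcal C(m,n)P_nx\|_m\le Ke^{-\lambda(m-n)}\|x\|_n$,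 $\|\mathcal C(n,m)Q_mx\|_n\le Ke^{-\lambda(m-n)}\|x\|_m$, $\|\mathcal C(m,n)x\|_m\le Ke^{a(m-n)}\|x\|_n$, $\|\mathcal C(n,m)x\|_n\le Ke^{a(m-n)}\|x\|_m$. $\Sigma_{ED,\mathbb A,\mathcal S}$: set of $\tau>0$ such that $(\tau^{-1}A_n)_{n\in\mathbb Z^+}$ does not admit a strong exponential dichotomy w.r.t. $\mathcal S$. *)

From HB Require Import structures.
From mathcomp Require Import all_boot all_order all_algebra.
From mathcomp Require Import classical_sets boolp reals sequences exp.
Set Implicit Arguments. Unset Strict Implicit. Unset Printing Implicit Defensive.
Import Order.TTheory GRing.Theory Num.Theory.
Local Open Scope ring_scope.
Local Open Scope classical_set_scope.

Section Defs.
Variables (R : realType) (d : nat).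

Definition is_norm (N : 'cV[R]_d -> R) : Prop :=
  [/\ forall x, 0 <= N x,
      forall x, N x = 0 -> x = 0,
      forall (c : R) x, N (c *: x) = `|c| * N x
    & forall x y, N (x + y) <= N x + N y].

(* fwd A n k = A_{n+k-1} ... A_n  (identity for k = 0) *)
Fixpoint fwd (A : nat -> 'M[R]_d) (n k : nat) : 'M[R]_d :=
  match k with
  | 0 => 1%:M
  | k'.+1 => A (n + k')%N *m fwd A n k'
  end.

(* bwd A m k = A_m^{-1} ... A_{m+k-1}^{-1}  (identity for k = 0) *)
Fixpoint bwd (A : nat -> 'M[R]_d) (m k : nat) : 'M[R]_d :=
  match k with
  | 0 => 1%:M
  | k'.+1 => bwd A m k' *m invmx (A (m + k')%N)
  end.

Definition cocycle (A : nat -> 'M[R]_d) (m n : nat) : 'M[R]_d :=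
  if (n <= m)%N then fwd A n (m - n) else bwd A m (n - m).

Definition S_r (A : nat -> 'M[R]_d) (N : nat -> 'cV[R]_d -> R) (r : R) (n : nat)
  : set 'cV[R]_d :=
  [set v | exists C : R, forall m : nat, (n <= m)%N ->
             r ^- (m - n) * N m (cocycle A m n *m v) <= C].

Definition strong_ED (C : nat -> 'M[R]_d) (N : nat -> 'cV[R]_d -> R) : Prop :=
  exists (K a lam : R) (P : nat -> 'M[R]_d),
    [/\ 0 < K, 0 < lam, lam <= a,
        (forall n, P n *m P n = P n) /\
        (forall n, C n *m P n = P n.+1 *m C n) &
        forall (m n : nat) (x : 'cV[R]_d), (n <= m)%N ->
          [/\ N m (cocycle C m n *m (P n *m x))
                <= K * expR (- lam * (m - n)%:R) * N n x,
              N n (cocycle C n m *m ((1%:M - P m) *m x))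
                <= K * expR (- lam * (m - n)%:R) * N m x,
              N m (cocycle C m n *m x) <= K * expR (a * (m - n)%:R) * N n x
            & N n (cocycle C n m *m x) <= K * expR (a * (m - n)%:R) * N m x]].

Definition Sigma_ED (A : nat -> 'M[R]_d) (N : nat -> 'cV[R]_d -> R) : set R :=
  [set tau | 0 < tau /\ ~ strong_ED (fun n => tau^-1 *: A n) N].

End Defs.

(* For s outside Sigma, the strong dichotomy of s^-1 A is a dichotomy of A
   whose stable part grows at most like e^(al k) and whose unstable part,
   run backwards, decays like e^(ga k), with al < ln s < -ga.  For every t
   with al < ln t < -ga the same projections give a strong dichotomy of
   t^-1 A, and S_t(n) is exactly the range of P_n.  So the complement of
   Sigma is open and t |-> S_t(n) is locally constant on it, hence constant
   on an interval [r1, r2] avoiding Sigma.  Conversely, if S_r1(n) = S_r2(n),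
   the projections of the dichotomies at r1 and r2 have the same ranges at
   time n, hence at every time, and the projections for r2 with the stable
   rate for r1 give a dichotomy that is strong for every t in [r1, r2]. *)

From HB Require Import structures.
From mathcomp Require Import all_boot all_order all_algebra.
From mathcomp Require Import classical_sets boolp reals sequences exp.
From mathcomp Require Import ring lra.
Import Order.TTheory GRing.Theory Num.Theory.
Local Open Scope ring_scope.
Local Open Scope classical_set_scope.
Set Implicit Arguments. Unset Strict Implicit.

Section Cocycle.
Variables (R : realType) (d : nat) (A : nat -> 'M[R]_d).

Definition fixed_vectors (P : 'M[R]_d) : set 'cV[R]_d := [set v | P *m v = v].

Lemma cocycle_fwd n k : cocycle A (n + k) n = fwd A n k.
Proof. by rewrite /cocycle leq_addr (addnC n k) addnK. Qed.

Lemma cocycle_bwd n k : cocycle A n (n + k) = bwd A n k.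
Proof.
rewrite /cocycle; case: k => [|k]; first by rewrite addn0 leqnn subnn.
by rewrite addnS ltnNge leq_addr /= -addnS (addnC n) addnK.
Qed.

Lemma fwdZ (c : R) n k : fwd (fun n => c *: A n) n k = c ^+ k *: fwd A n k.
Proof.
elim: k => [|k IH] /=; first by rewrite scale1r.
by rewrite IH -scalemxAl -scalemxAr scalerA exprS.
Qed.

Lemma fwd_intertwine (P : nat -> 'M[R]_d) n k :
  (forall n, A n *m P n = P n.+1 *m A n) ->
  P (n + k)%N *m fwd A n k = fwd A n k *m P n.
Proof.
move=> AP; elim: k => [|k IH] /=; first by rewrite addn0 mul1mx mulmx1.
by rewrite addnS mulmxA -AP -mulmxA IH mulmxA.
Qed.

Hypothesis unitA : forall n, A n \in unitmx.

Lemma mul_bwd_fwd n k : bwd A n k *m fwd A n k = 1%:M.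
Proof.
elim: k => [|k IH] /=; first by rewrite mul1mx.
by rewrite mulmxA -(mulmxA (bwd A n k)) mulVmx // mulmx1.
Qed.

Lemma mul_fwd_bwd n k : fwd A n k *m bwd A n k = 1%:M.
Proof.
elim: k => [|k IH] /=; first by rewrite mul1mx.
by rewrite mulmxA -(mulmxA (A _)) IH mulmx1 mulmxV.
Qed.

Lemma bwdZ (c : R) n k : c != 0 ->
  bwd (fun n => c *: A n) n k = c^-1 ^+ k *: bwd A n k.
Proof.
move=> c0; elim: k => [|k IH] /=; first by rewrite scale1r.
rewrite IH invmxZ; last by rewrite unitmxZ ?unitfE.
by rewrite -scalemxAl -scalemxAr scalerA exprSr.
Qed.

Lemma fwd_fixed (P : nat -> 'M[R]_d) n k (v : 'cV[R]_d) :
  (forall n, A n *m P n = P n.+1 *m A n) ->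
  P (n + k)%N *m (fwd A n k *m v) = fwd A n k *m v <-> P n *m v = v.
Proof.
move=> AP; rewrite mulmxA fwd_intertwine // -mulmxA; split => [|-> //].
by move/(congr1 (mulmx (bwd A n k))); rewrite !mulmxA mul_bwd_fwd !mul1mx.
Qed.

Lemma fixed_vectors_eq_all (P1 P2 : nat -> 'M[R]_d) n0 :
  (forall n, A n *m P1 n = P1 n.+1 *m A n) ->
  (forall n, A n *m P2 n = P2 n.+1 *m A n) ->
  fixed_vectors (P1 n0) = fixed_vectors (P2 n0) ->
  forall n, fixed_vectors (P1 n) = fixed_vectors (P2 n).
Proof.
move=> AP1 AP2 + n; rewrite /fixed_vectors !predeqE /= => eqv v.
have [/subnKC en0|/ltnW/subnKC en] := leqP n n0.
- move: eqv; rewrite -en0 => eqv.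
  by rewrite -(@fwd_fixed P1 n (n0 - n) v AP1) -(@fwd_fixed P2 n (n0 - n) v AP2).
- rewrite -en -[v]mul1mx -(mul_fwd_bwd n0 (n - n0)) -mulmxA.
  by rewrite !fwd_fixed.
Qed.
End Cocycle.

Lemma exprn_expR_ln (R : realType) (c : R) k : 0 < c -> c ^+ k = expR (ln c * k%:R).
Proof. by move=> c0; rewrite expRM_natr lnK. Qed.

Section Norm.
Variables (R : realType) (d : nat) (N : 'cV[R]_d -> R).
Hypothesis normN : is_norm N.

Lemma nrm_ge0 x : 0 <= N x.
Proof. by case: normN. Qed.

Lemma nrm_eq0 x : N x = 0 -> x = 0.
Proof. by case: normN => _ + _ _; apply. Qed.

Lemma nrmZ c x : N (c *: x) = `|c| * N x.
Proof. by case: normN. Qed.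

Lemma nrmB x y : N (x - y) <= N x + N y.
Proof.
case: normN => _ _ _ /(_ x (- y)); congr (_ <= _ + _).
by rewrite -scaleN1r nrmZ normrN normr1 mul1r.
Qed.

Lemma nrm_exprZ_le (c : R) k y (K b X : R) : 0 < c ->
  (N (c ^+ k *: y) <= K * expR (b * k%:R) * X) =
  (N y <= K * expR ((b - ln c) * k%:R) * X).
Proof.
move=> c0; rewrite nrmZ ger0_norm; last exact/exprn_ge0/ltW.
rewrite exprn_expR_ln // -ler_pdivlMl ?expR_gt0 // -expRN; congr (_ <= _).
by rewrite mulrBl expRD; ring.
Qed.

End Norm.

Lemma exp_bound_mono (R : realType) (K K' b b' X : R) k :
  0 <= K <= K' -> b <= b' -> 0 <= X ->
  K * expR (b * k%:R) * X <= K' * expR (b' * k%:R) * X.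
Proof.
move=> /andP[K0 KK'] bb' X0; apply: ler_wpM2r => //.
by apply: ler_pM => //; [exact: expR_ge0 | rewrite ler_expR ler_wpM2r].
Qed.

Lemma exp_decay_le0 (R : realType) (z M mu : R) : mu < 0 ->
  (forall k : nat, z <= M * expR (mu * k%:R)) -> z <= 0.
Proof.
move=> mu0 hz; rewrite leNgt; apply/negP => z0.
have Mz : z <= M by have := hz 0%N; rewrite mulr0 expR0 mulr1.
pose k := Num.bound (M / (z * - mu)).
have Mk : M < z * - mu * k%:R.
  rewrite -ltr_pdivrMl ?mulr_gt0 ?oppr_gt0 // mulrC archi_boundP //.
  by rewrite divr_ge0 // ?mulr_ge0; lra.
have zk : z * (1 - mu * k%:R) <= M.
  apply: le_trans (_ : z * expR (- mu * k%:R) <= M).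
    by rewrite ler_wpM2l ?(ltW z0) // -mulNr expR_ge1Dx.
  by rewrite -ler_pdivlMr ?expR_gt0 // -expRN mulNr opprK.
nra.
Qed.

(* Rates are logarithmic: given bounded growth, [tau^-1 A] has a strong
   dichotomy with the same projections whenever [al < ln tau < - ga]. *)
Definition exp_dichotomy (R : realType) d (A P : nat -> 'M[R]_d)
    (N : nat -> 'cV[R]_d -> R) (K al ga : R) : Prop :=
  [/\ 0 < K, (forall n, P n *m P n = P n),
      (forall n, A n *m P n = P n.+1 *m A n),
      (forall n k x, N (n + k)%N (fwd A n k *m (P n *m x))
                       <= K * expR (al * k%:R) * N n x)
    & (forall n k x, N n (bwd A n k *m ((1%:M - P (n + k)%N) *m x))
                       <= K * expR (ga * k%:R) * N (n + k)%N x)].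

Definition bounded_growth (R : realType) d (A : nat -> 'M[R]_d)
    (N : nat -> 'cV[R]_d -> R) : Prop :=
  exists K a : R, [/\ 0 < K, 0 < a &
    forall (m n : nat) (x : 'cV[R]_d), (n <= m)%N ->
      N m (cocycle A m n *m x) <= K * expR (a * (m - n)%:R) * N n x /\
      N n (cocycle A n m *m x) <= K * expR (a * (m - n)%:R) * N m x].

Section Spectrum.
Variables (R : realType) (d : nat) (A : nat -> 'M[R]_d) (N : nat -> 'cV[R]_d -> R).
Hypothesis unitA : forall n, A n \in unitmx.
Hypothesis normN : forall n, is_norm (N n).

Lemma notin_Sigma_dichotomy s : 0 < s -> ~ Sigma_ED A N s ->
  exists P K al ga, [/\ exp_dichotomy A P N K al ga, al < ln s & ln s < - ga].
Proof.
move=> s0 notS.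
have [K [a [lam [P [K0 lam0 _ [PP AP] B]]]]] : strong_ED (fun n => s^-1 *: A n) N.
  by apply: contrapT => notED; apply: notS.
have s'0 : s^-1 != 0 by rewrite invr_eq0 gt_eqF.
exists P, K, (- lam - ln s^-1), (- lam - ln s); split; last 2 first.
- by rewrite lnV ?posrE //; lra.
- by lra.
split => //.
- by move=> n; apply: (scalerI s'0); rewrite scalemxAl scalemxAr AP.
- move=> n k x; have [+ _ _ _] := B (n + k)%N n x (leq_addr _ _).
  by rewrite addKn cocycle_fwd fwdZ -scalemxAl nrm_exprZ_le ?invr_gt0.
- move=> n k x; have [_ + _ _] := B (n + k)%N n x (leq_addr _ _).
  by rewrite addKn cocycle_bwd bwdZ // invrK -scalemxAl nrm_exprZ_le.
Qed.

Lemma dichotomy_notin_Sigma P K al ga s :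
  bounded_growth A N -> exp_dichotomy A P N K al ga ->
  0 < s -> al < ln s -> ln s < - ga -> ~ Sigma_ED A N s.
Proof.
move=> [K' [a' [K'0 a'0 G]]] [K0 PP AP Bs Bu] s0 als gas [_]; apply.
have s'0 : s^-1 != 0 by rewrite invr_eq0 gt_eqF.
pose lam := Num.min (ln s - al) (- ga - ln s).
have lam0 : 0 < lam by rewrite lt_min; apply/andP; split; lra.
have lam_s : lam <= ln s - al by rewrite ge_min lexx.
have lam_u : lam <= - ga - ln s by rewrite ge_min lexx orbT.
have /andP[ln_ge ln_le] : - `|ln s| <= ln s <= `|ln s| by rewrite -ler_norml.
exists (K + K'), (a' + `|ln s| + lam), lam, P; split; try lra.
  by split => // n; rewrite -scalemxAl -scalemxAr AP.
move=> m n x /subnKC <-; rewrite addKn; set k := (m - n)%N.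
have [G1 G2] := G (n + k)%N n x (leq_addr _ _).
rewrite addKn cocycle_fwd cocycle_bwd in G1 G2.
rewrite cocycle_fwd cocycle_bwd fwdZ bwdZ // invrK -!scalemxAl.
rewrite !nrm_exprZ_le ?invr_gt0 // lnV ?posrE //.
have KK : 0 <= K <= K + K' by rewrite ltW //= lerDl ltW.
have K'K : 0 <= K' <= K + K' by rewrite ltW //= lerDr ltW.
split; [apply: le_trans (Bs n k x) _ | apply: le_trans (Bu n k x) _
       | apply: le_trans G1 _ | apply: le_trans G2 _];
  by apply: exp_bound_mono; rewrite ?nrm_ge0 //; lra.
Qed.

Lemma S_rE s n v : 0 < s ->
  S_r A N s n v <-> exists C, forall k, N (n + k)%N (fwd A n k *m v) <= s ^+ k * C.
Proof.
move=> s0; split=> -[C hC]; exists C.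
- move=> k; have := hC (n + k)%N (leq_addr _ _).
  by rewrite addKn cocycle_fwd ler_pdivrMl ?exprn_gt0.
- move=> m /subnKC <-.
  by rewrite addKn cocycle_fwd ler_pdivrMl ?exprn_gt0.
Qed.

Lemma S_r_dichotomy P K al ga s n :
  exp_dichotomy A P N K al ga -> 0 < s -> al < ln s -> ln s < - ga ->
  S_r A N s n = fixed_vectors (P n).
Proof.
move=> [K0 PP AP Bs Bu] s0 als gas; apply/seteqP; split => v; last first.
  move=> /= Pv; apply/S_rE => //; exists (K * N n v) => k.
  rewrite -{1}Pv; apply: le_trans (Bs n k v) _.
  rewrite exprn_expR_ln // mulrCA mulrA.
  by apply: exp_bound_mono; rewrite ?(nrm_ge0 (normN n)) ?(ltW K0) ?(ltW als) ?lexx.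
move=> /(S_rE _ _ s0) [C hC] /=.
(* The unstable component of [v] is pulled back from time [n + k], where it
   is [O(s ^ k)], by a backward map contracting like [e ^ (ga k)]. *)
suff : (1%:M - P n) *m v = 0 by rewrite mulmxBl mul1mx => /subr0_eq/esym.
apply: (nrm_eq0 (normN n)); apply/le_anti; rewrite (nrm_ge0 (normN n)) andbT.
apply: (@exp_decay_le0 _ _ (K * C) (ga + ln s)) => [|k]; first lra.
have PQ : (1%:M - P (n + k)%N) *m fwd A n k = fwd A n k *m (1%:M - P n).
  by rewrite mulmxBl mulmxBr mul1mx mulmx1 fwd_intertwine.
have -> : (1%:M - P n) *m v = bwd A n k *m ((1%:M - P (n + k)%N) *m (fwd A n k *m v)).
  by rewrite (mulmxA (1%:M - _)) PQ !(mulmxA (bwd A n k)) mul_bwd_fwd // mul1mx.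
apply: le_trans (Bu n k _) _.
have -> : K * C * expR ((ga + ln s) * k%:R)
          = K * expR (ga * k%:R) * (s ^+ k * C).
  by rewrite exprn_expR_ln // mulrDl expRD; ring.
by apply: ler_wpM2l (hC k); rewrite mulr_ge0 ?expR_ge0 ?(ltW K0).
Qed.

Lemma exp_dichotomy_combine P1 P2 K1 K2 al1 ga1 al2 ga2 :
  exp_dichotomy A P1 N K1 al1 ga1 -> exp_dichotomy A P2 N K2 al2 ga2 ->
  (forall n, fixed_vectors (P2 n) `<=` fixed_vectors (P1 n)) ->
  exp_dichotomy A P2 N (K1 * (1 + K2) + K2) al1 ga2.
Proof.
move=> [K1_gt0 _ _ Bs1 _] [K2_gt0 PP2 AP2 _ Bu2] sub21.
have K12 : 0 <= K1 * (1 + K2) by apply: mulr_ge0; lra.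
split => //.
- by rewrite ltr_wpDl.
- move=> n k x.
  have -> : P2 n *m x = P1 n *m (P2 n *m x).
    by apply/esym/sub21; rewrite /fixed_vectors /= mulmxA PP2.
  apply: le_trans (Bs1 n k _) _.
  have P2x : N n (P2 n *m x) <= (1 + K2) * N n x.
    have := Bu2 n 0%N x; rewrite addn0 mul1mx mulr0 expR0 mulr1 => Q2x.
    have -> : P2 n *m x = x - (1%:M - P2 n) *m x by rewrite mulmxBl mul1mx subKr.
    by apply: le_trans (nrmB (normN n) _ _) _; lra.
  apply: le_trans (ler_wpM2l _ P2x) _; first by rewrite mulr_ge0 ?expR_ge0 ?ltW.
  have -> : K1 * expR (al1 * k%:R) * ((1 + K2) * N n x)
            = K1 * (1 + K2) * expR (al1 * k%:R) * N n x by ring.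
  apply: exp_bound_mono; rewrite ?lexx ?(nrm_ge0 (normN _)) //.
  by rewrite K12 lerDl ltW.
- move=> n k x; apply: le_trans (Bu2 n k x) _.
  apply: exp_bound_mono; rewrite ?lexx ?(nrm_ge0 (normN _)) //.
  by rewrite (ltW K2_gt0) lerDr.
Qed.

Lemma Sigma_gap_of_S_r_eq r1 r2 n0 : bounded_growth A N ->
  0 < r1 -> r1 < r2 -> ~ Sigma_ED A N r1 -> ~ Sigma_ED A N r2 ->
  S_r A N r1 n0 = S_r A N r2 n0 ->
  [set t | r1 <= t <= r2] `&` Sigma_ED A N = set0.
Proof.
move=> growthA r1_gt0 r12 notS1 notS2 eqS.
have r2_gt0 : 0 < r2 by apply: lt_trans r12.
have [P1 [K1 [al1 [ga1 [D1 al1r1 r1ga1]]]]] := notin_Sigma_dichotomy r1_gt0 notS1.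
have [P2 [K2 [al2 [ga2 [D2 al2r2 r2ga2]]]]] := notin_Sigma_dichotomy r2_gt0 notS2.
have eq_fixed : forall n, fixed_vectors (P1 n) = fixed_vectors (P2 n).
  apply: (fixed_vectors_eq_all unitA (n0 := n0)); [by case: D1 | by case: D2 |].
  rewrite -(S_r_dichotomy n0 D1 r1_gt0 al1r1 r1ga1).
  by rewrite -(S_r_dichotomy n0 D2 r2_gt0 al2r2 r2ga2).
have D : exp_dichotomy A P2 N (K1 * (1 + K2) + K2) al1 ga2.
  by apply: exp_dichotomy_combine D1 D2 _ => n; rewrite eq_fixed.
apply/seteqP; split => t //= [/andP[r1t tr2] St]; have [t_gt0 _] := St.
apply: (dichotomy_notin_Sigma growthA D t_gt0 _ _ St).
- by apply: lt_le_trans al1r1 _; rewrite ler_ln ?posrE.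
- by apply: le_lt_trans r2ga2; rewrite ler_ln ?posrE.
Qed.

Lemma notin_Sigma_S_r_locally_constant s : 0 < s -> ~ Sigma_ED A N s ->
  exists2 e : R, 0 < e & forall t, s - e < t -> t < s + e ->
    forall n, S_r A N t n = S_r A N s n.
Proof.
move=> s_gt0 notS.
have [P [K [al [ga [D als sga]]]]] := notin_Sigma_dichotomy s_gt0 notS.
have lo : expR al < s by rewrite -[X in _ < X]lnK ?posrE // ltr_expR.
have hi : s < expR (- ga) by rewrite -[X in X < _]lnK ?posrE // ltr_expR.
exists (Num.min (s - expR al) (expR (- ga) - s)).
  by rewrite lt_min; apply/andP; split; lra.
move=> t st ts n.
have e_lo : Num.min (s - expR al) (expR (- ga) - s) <= s - expR al.
  by rewrite ge_min lexx.
have e_hi : Num.min (s - expR al) (expR (- ga) - s) <= expR (- ga) - s.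
  by rewrite ge_min lexx orbT.
have t_gt0 : 0 < t by apply: lt_trans (expR_gt0 al) _; lra.
have alt : al < ln t by rewrite -(expRK al) ltr_ln ?posrE ?expR_gt0 //; lra.
have tga : ln t < - ga by rewrite -(expRK (- ga)) ltr_ln ?posrE ?expR_gt0 //; lra.
by rewrite (S_r_dichotomy n D t_gt0 alt tga) (S_r_dichotomy n D s_gt0 als sga).
Qed.

Lemma S_r_eq_of_Sigma_gap r1 r2 : 0 < r1 -> r1 <= r2 ->
  [set t | r1 <= t <= r2] `&` Sigma_ED A N = set0 ->
  forall n, S_r A N r1 n = S_r A N r2 n.
Proof.
move=> r1_gt0 r12 gap.
(* Local constancy pushes the supremum of [E] up to [r2]. *)
pose E := [set s | r1 <= s <= r2 /\ forall n, S_r A N s n = S_r A N r1 n].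
have Er1 : E r1 by split; rewrite ?lexx.
have supE : has_sup E by split; [exists r1 | exists r2 => s [/andP[]]].
set s := sup E.
have r1s : r1 <= s := sup_upper_bound supE Er1.
have sr2 : s <= r2 by apply: ge_sup; [exists r1 | move=> t [/andP[]]].
have notS : ~ Sigma_ED A N s.
  move=> Ss; have : ([set t | r1 <= t <= r2] `&` Sigma_ED A N) s.
    by split; rewrite //= r1s sr2.
  by rewrite gap.
have [e e_gt0 loc] := notin_Sigma_S_r_locally_constant (lt_le_trans r1_gt0 r1s) notS.
have [t Et st] := sup_adherent e_gt0 supE.
have ts : t <= s := sup_upper_bound supE Et.
have Ss : forall n, S_r A N s n = S_r A N r1 n.
  by case: Et => _ St n; rewrite -St loc //; lra.
suff -> : r2 = s by move=> n; rewrite Ss.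
apply/eqP; rewrite eq_le sr2 andbT leNgt; apply/negP => s_lt_r2.
pose u := Num.min (s + e / 2) r2.
have s_lt_u : s < u by rewrite lt_min s_lt_r2 andbT; lra.
have Eu : E u.
  split; first by rewrite ge_min lexx orbT andbT (le_trans r1s) ?ltW.
  have u_le : u <= s + e / 2 by rewrite ge_min lexx.
  by move=> n; rewrite loc ?Ss //; lra.
by have := sup_upper_bound supE Eu; rewrite leNgt s_lt_u.
Qed.

End Spectrum.

Unset Implicit Arguments. Set Strict Implicit.

Theorem lemma7p5 (R : realType) (d : nat) (A : nat -> 'M[R]_d)
  (N : nat -> 'cV[R]_d -> R) :
  (forall n, A n \in unitmx) ->
  (forall n, is_norm (N n)) ->
  (exists K a : R, [/\ 0 < K, 0 < a &
     forall (m n : nat) (x : 'cV[R]_d), (n <= m)%N ->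
       N m (cocycle A m n *m x) <= K * expR (a * (m - n)%:R) * N n x /\
       N n (cocycle A n m *m x) <= K * expR (a * (m - n)%:R) * N m x]) ->
  forall r1 r2 : R, 0 < r1 -> r1 < r2 ->
    ~ Sigma_ED A N r1 -> ~ Sigma_ED A N r2 ->
    ((exists n : nat, S_r A N r1 n = S_r A N r2 n) <->
       [set t | r1 <= t <= r2] `&` Sigma_ED A N = set0) /\
    ((forall n : nat, S_r A N r1 n = S_r A N r2 n) <->
       [set t | r1 <= t <= r2] `&` Sigma_ED A N = set0).
Proof.
move=> unitA normN growthA r1 r2 r1_gt0 r12 notS1 notS2.
have gap_of_eq n : S_r A N r1 n = S_r A N r2 n ->
    [set t | r1 <= t <= r2] `&` Sigma_ED A N = set0.
  exact: (Sigma_gap_of_S_r_eq unitA normN growthA r1_gt0 r12 notS1 notS2).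
have eq_of_gap := S_r_eq_of_Sigma_gap unitA normN r1_gt0 (ltW r12).
split; split.
- by case=> n /gap_of_eq.
- by move=> /eq_of_gap eqS; exists 0%N.
- by move=> eqS; apply: (gap_of_eq 0%N).
- exact: eq_of_gap.
Qed.
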